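(* Let $K$ be a field, let $\lambda_0,\dots,\lambda_{n+1}\in K^\times\setminus\{1\}$ with $\prod_{i=0}^{n+1}\lambda_i=1$, and let $(g_1,\dots,g_{n+1})$ be the Jordan–Pochhammer tuple in $\mathrm{GL}_n(K)$ with parameters $(\lambda_0;\lambda_1,\dots,\lambda_{n+1})$. For a nonempty subset $S=\{i_1<\dots<i_s\}\subseteq\{1,\dots,n+1\}$ with $s\le n$, let $g_S:=g_{i_1}\cdots g_{i_s}$ (ordered product) and $\lambda_S:=\prod_{i\in S}\lambda_i$. Then \[ \dim\ker(g_S-1)=n-|S|,\qquad \dim\ker(g_S-\lambda_0)=|S|-1, \] and the remaining eigenvalue of $g_S$ is $\lambda_0\lambda_S$. Moreover, if $\lambda_S\neq 1$, then $\operatorname{im}(g_S-1)$ is invariant under $g_i$ ($i\in S$), and the restriction of the tuple $(g_{i_1},\dots,g_{i_s},\lambda_0g_S^{-1})$ to $\operatorname{im}(g_S-1)$ is the Jordan–Pochhammer tuple with parameters $(\lambda_0;\lambda_{i_1},\dots,\lambda_{i_s},1/(\lambda_0\lambda_S))$.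
   Context: Given a field $K$ and $\lambda_0,\dots,\lambda_{n+1}\in K^\times\setminus\{1\}$ with $\prod_i\lambda_i=1$, a Jordan–Pochhammer tuple with parameters $(\lambda_0;\lambda_1,\dots,\lambda_{n+1})$ is a tuple $(g_1,\dots,g_{n+1})$ of elements of $\mathrm{GL}_n(K)$ with $\operatorname{rank}(g_i-1)\le 1$, $\det g_i=\lambda_0\lambda_i$ for all $i$, and $g_1g_2\cdots g_{n+1}=\lambda_0\cdot I_n$. Such a tuple exists, is unique up to simultaneous conjugation, consists of pseudoreflections and generates an irreducible subgroup (the Jordan–Pochhammer group). *)

From HB Require Import structures.
From mathcomp Require Import all_boot all_order all_algebra.
Set Implicit Arguments. Unset Strict Implicit. Unset Printing Implicit Defensive.
Import Order.TTheory GRing.Theory.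
Local Open Scope ring_scope.

(* Convention: matrices act on COLUMN vectors (v |-> g *m v).
   Parameters (lambda_0; lambda_1, ..., lambda_{m+1}) are a function
   lam : 'I_m.+2 -> K (lam k = lambda_k); a tuple (g_1, ..., g_{m+1}) is a
   function g : 'I_m.+1 -> 'M_m with g j = g_{j+1}, whose parameter is
   lam (lift ord0 j) = lambda_{j+1}. *)

Definition JP_params (K : fieldType) (m : nat) (lam : 'I_m.+2 -> K) : Prop :=
  (forall k, lam k != 0 /\ lam k != 1) /\ \prod_(k < m.+2) lam k = 1.

Definition JP_tuple (K : fieldType) (m : nat) (lam : 'I_m.+2 -> K)
    (g : 'I_m.+1 -> 'M[K]_m) : Prop :=
  [/\ forall j, g j \in unitmx,
      forall j, (\rank (g j - 1%:M)%R <= 1)%N,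
      forall j, \det (g j) = lam ord0 * lam (lift ord0 j)
    & \big[mulmx/1%:M]_(j < m.+1) g j = (lam ord0)%:M ].

(* g_S := g_{i_1} ... g_{i_s} for S = {i_1 < ... < i_s}
   (enum of a set of ordinals is increasing). *)
Definition gprod (K : fieldType) (m : nat) (g : 'I_m.+1 -> 'M[K]_m)
    (S : {set 'I_m.+1}) : 'M[K]_m :=
  \big[mulmx/1%:M]_(i <- enum S) g i.

Definition lamS (K : fieldType) (m : nat) (lam : 'I_m.+2 -> K)
    (S : {set 'I_m.+1}) : K :=
  \prod_(i in S) lam (lift ord0 i).

(* the parameters (lambda_0; lambda_{i_1}, ..., lambda_{i_s}, 1/(lambda_0 lambda_S)) *)
Definition restr_params (K : fieldType) (m : nat) (lam : 'I_m.+2 -> K)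
    (S : {set 'I_m.+1}) : 'I_(#|S|).+2 -> K :=
  fun k =>
    if (k : nat) == 0%N then lam ord0
    else match insub (k.-1) : option 'I_#|S| with
         | Some j => lam (lift ord0 (enum_val j))
         | None => (lam ord0 * lamS lam S)^-1
         end.
Arguments restr_params {K m} lam S k.

From HB Require Import structures.
From mathcomp Require Import all_boot all_order all_algebra.
From mathcomp Require Import zify.
(* Each g_j is a pseudoreflection avoiding the eigenvalue lambda_0: as
   det g_j = lambda_0 lambda_j with lambda_j <> 1, the matrix g_j - lambda_0 is
   invertible.  Moving the factors g_j, j notin S, of g_1 ... g_{n+1} = lambda_0
   to the right conjugates them, so g_S C = lambda_0 with C a product of n+1-s
   such pseudoreflections.  A product P of k pseudoreflections has
   rank (P - 1) <= k, and rank (P - c) >= n+1-k when its first factor avoids c;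
   applied to g_S and to C this gives rank (g_S - 1) = s and
   rank (g_S - lambda_0) = n+1-s.  The s-dimensional image of g_S - 1 lies in
   the sum of the s lines im (g_i - 1), i in S, hence equals it and is
   invariant under these g_i, while g_S acts trivially on the quotient.  On the
   image, g_S - lambda_0 has rank 1, which together with
   det g_S = lambda_0^s lambda_S determines the characteristic polynomial; the
   restricted tuple inherits its ranks and determinants. *)

Set Implicit Arguments. Unset Strict Implicit. Unset Printing Implicit Defensive.
Import Order.TTheory GRing.Theory.
Local Open Scope ring_scope.

HB.instance Definition mulmx_monoid (K : fieldType) (m : nat) :=
  Monoid.isLaw.Build 'M[K]_m 1%:M (@mulmx K m m m) (@mulmxA K m m m m)
    (@mul1mx K m m) (@mulmx1 K m m).

Section ProductsOfPseudoreflections.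
Variables (K : fieldType) (n : nat).
Implicit Types (A B Y y z : 'M[K]_n) (a c : K).

Lemma mulmx_sub1 A B : A *m B - 1%:M = A *m (B - 1%:M) + (A - 1%:M).
Proof. by rewrite mulmxBr mulmx1 addrA subrK. Qed.

Lemma big_mulmx_sub1_sub (I : Type) (r : seq I) (F : I -> 'M[K]_n) :
  ((\big[mulmx/1%:M]_(i <- r) F i - 1%:M)^T <= \sum_(i <- r) (F i - 1%:M)^T)%MS.
Proof.
elim: r => [|a r IH]; first by rewrite big_nil subrr trmx0 sub0mx.
rewrite !big_cons mulmx_sub1 raddfD /= trmx_mul addmx_sub ?addsmxSl //.
have -> : (F a)^T = 1%:M + (F a - 1%:M)^T by rewrite raddfB /= trmx1 addrC subrK.
rewrite mulmxDr mulmx1 addmx_sub ?(submx_trans IH) ?addsmxSr //.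
exact: submx_trans (submxMl _ _) (addsmxSl _ _).
Qed.

Lemma mxrank_sumsmx_le (I : Type) (r : seq I) (F : I -> 'M[K]_n) :
  (\rank (\sum_(i <- r) F i)%MS <= \sum_(i <- r) \rank (F i))%N.
Proof.
apply: (big_ind2 (fun (M : 'M[K]_n) (k : nat) => \rank M <= k)%N) => //.
- by rewrite mxrank0.
- by move=> A1 k1 A2 k2 h1 h2; apply: leq_trans (mxrank_adds_leqif _ _).1 (leq_add h1 h2).
Qed.

Lemma mxrank_big_mulmx_sub1 (I : eqType) (r : seq I) (F : I -> 'M[K]_n) :
  {in r, forall i, \rank (F i - 1%:M)%R <= 1}%N ->
  (\rank (\big[mulmx/1%:M]_(i <- r) F i - 1%:M)%R <= size r)%N.
Proof.
move=> r1; rewrite -mxrank_tr.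
apply: leq_trans (mxrankS (big_mulmx_sub1_sub r F)) _.
apply: leq_trans (mxrank_sumsmx_le _ _) _.
rewrite -sum1_size big_seq_cond [X in (_ <= X)%N]big_seq_cond.
by apply: leq_sum => i /andP[/r1]; rewrite mxrank_tr.
Qed.

(* [A Y - c = (A - c) + A (Y - 1)] and [A - c] has full rank. *)
Lemma mxrank_mulmx_sub_scalar_ge A Y c : A - c%:M \in unitmx ->
  (n <= \rank (A *m Y - c%:M)%R + \rank (Y - 1%:M)%R)%N.
Proof.
rewrite -row_full_unit => /eqP {1}<-.
have -> : A - c%:M = (A *m Y - c%:M) - A *m (Y - 1%:M).
  by rewrite mulmxBr mulmx1 opprB [RHS]addrC [RHS]addrA subrK.
apply: leq_trans (mxrank_add _ _) _; rewrite mxrank_opp leq_add2l.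
exact: mxrankM_maxr.
Qed.

Lemma mulmx_kermx_sub_scalar A c : kermx (A - c%:M) *m A = c *: kermx (A - c%:M).
Proof.
have /sub_kermxP : (kermx (A - c%:M) <= kermx (A - c%:M))%MS by [].
by rewrite mulmxBr mul_mx_scalar => /eqP; rewrite subr_eq0 => /eqP.
Qed.

Lemma kermx_sub_scalar_sub A a c : c != a -> (kermx (A - c%:M) <= A - a%:M)%MS.
Proof.
rewrite -subr_eq0 => ca; set N := kermx _.
have -> : N = (c - a)^-1 *: (N *m (A - a%:M)).
  by rewrite mulmxBr mulmx_kermx_sub_scalar mul_mx_scalar -scalerBl scalerA mulVf ?scale1r.
by rewrite scalemx_sub // submxMl.
Qed.

Definition pseudorefl c y : bool :=
  (\rank (y - 1%:M)%R <= 1)%N && (y - c%:M \in unitmx).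

Lemma pseudorefl_conj c y z : z \in unitmx -> pseudorefl c y ->
  pseudorefl c (invmx z *m y *m z).
Proof.
move=> zu /andP[y1 yc]; have conjB b : invmx z *m y *m z - b%:M = invmx z *m (y - b%:M) *m z.
  by rewrite mulmxBr mulmxBl mul_mx_scalar -scalemxAl mulVmx // scalemx1.
rewrite /pseudorefl !conjB !unitmx_mul unitmx_inv zu yc mxrankMfree ?row_free_unit //.
by rewrite (eqmxMfull _ _) ?y1 // row_full_unit unitmx_inv.
Qed.

Lemma mxrank_big_mulmx_sub_scalar_ge (I : eqType) (r : seq I) (F : I -> 'M[K]_n) c :
  r != [::] -> {in r, forall i, pseudorefl c (F i)} ->
  (n.+1 <= \rank (\big[mulmx/1%:M]_(i <- r) F i - c%:M)%R + size r)%N.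
Proof.
case: r => [//|i r] _ rP; have /andP[_ Fic] := rP i (mem_head _ _).
rewrite big_cons /= addnS ltnS.
apply: leq_trans (mxrank_mulmx_sub_scalar_ge (\big[mulmx/1%:M]_(j <- r) F j) Fic) _.
rewrite leq_add2l mxrank_big_mulmx_sub1 // => j jr.
by have /andP[] := rP j (mem_behead (s := i :: r) jr).
Qed.

Lemma big_mulmx_unit (I : Type) (r : seq I) (p : pred I) (F : I -> 'M[K]_n) :
  (forall i, F i \in unitmx) -> \big[mulmx/1%:M]_(i <- r | p i) F i \in unitmx.
Proof.
move=> Fu; apply: (big_ind (fun x => x \in unitmx)) => [|x y xu yu|//].
  exact: unitmx1.
by rewrite unitmx_mul xu yu.
Qed.

(* Moving the factors outside [p] to the right conjugates them by partial products. *)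
Lemma big_mulmx_filter_conj (I : Type) (r : seq I) (p : pred I)
    (F : I -> 'M[K]_n) (P : pred 'M[K]_n) :
  (forall y z, z \in unitmx -> P y -> P (invmx z *m y *m z)) ->
  (forall i, F i \in unitmx) -> (forall i, P (F i)) ->
  exists cs : seq 'M_n, [/\ size cs = count (predC p) r, all P cs
   & \big[mulmx/1%:M]_(i <- r) F i
       = \big[mulmx/1%:M]_(i <- r | p i) F i *m \big[mulmx/1%:M]_(y <- cs) y].
Proof.
move=> PJ Fu FP; elim: r => [|a r [cs [sz Pcs E]]].
  by exists [::]; rewrite !big_nil mulmx1.
rewrite !big_cons E; case: (boolP (p a)) => pa /=.
  by exists cs; rewrite pa /= add0n mulmxA.
set G := \big[mulmx/1%:M]_(i <- r | p i) F i.
have Gu : G \in unitmx by apply: big_mulmx_unit.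
exists (invmx G *m F a *m G :: cs); split => /=.
- by rewrite sz pa.
- by rewrite Pcs andbT PJ.
by rewrite big_cons !mulmxA mulmxV // mul1mx.
Qed.

Lemma big_mulmx_intertwine (I : eqType) (r : seq I) k (G : I -> 'M[K]_n)
    (H : I -> 'M[K]_k) (B : 'M_(n, k)) :
  {in r, forall i, G i *m B = B *m H i} ->
  \big[mulmx/1%:M]_(i <- r) G i *m B = B *m \big[mulmx/1%:M]_(i <- r) H i.
Proof.
elim: r => [|a r IH] GH; first by rewrite !big_nil mul1mx mulmx1.
rewrite !big_cons -mulmxA IH => [|i ir]; last by apply: GH; rewrite inE ir orbT.
by rewrite !mulmxA GH ?mem_head.
Qed.

End ProductsOfPseudoreflections.

Section InvariantSubspaces.
Variable K : fieldType.

Lemma tr_sub_scalar m (A : 'M[K]_m) c : (A - c%:M)^T = A^T - c%:M.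
Proof. by rewrite raddfB /= tr_scalar_mx. Qed.

Lemma char_poly_tr n (A : 'M[K]_n) : char_poly A^T = char_poly A.
Proof.
rewrite /char_poly -det_tr; congr (\det _).
by rewrite /char_poly_mx raddfB /= tr_scalar_mx map_trmx trmxK.
Qed.

Lemma char_poly_similar p n (Q : 'M[K]_(p, n)) (A : 'M_n) (B : 'M_p) :
  p = n -> row_full Q -> Q *m A = B *m Q -> char_poly A = char_poly B.
Proof.
move=> e; case: n / e in A Q *; rewrite row_full_unit => Qu QA.
pose f := @map_mx K {poly K} (@polyC K) p p.
have fQA : f Q *m char_poly_mx A = char_poly_mx B *m f Q.
  by rewrite /char_poly_mx mulmxBr mulmxBl -!map_mxM QA -scalar_mxC.
have fQ0 : \det (f Q) != 0 by rewrite det_map_mx polyC_eq0 -unitfE -unitmxE.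
apply: (mulIf fQ0); rewrite /char_poly -!det_mulmx -fQA det_mulmx mulrC.
by rewrite det_mulmx.
Qed.

Lemma char_poly_lblock m k (h : 'M[K]_k) (Y : 'M_(m, k)) (D : 'M_m) :
  char_poly (block_mx h 0 Y D) = char_poly h * char_poly D.
Proof.
rewrite /char_poly -(det_lblock _ (- map_mx (@polyC K) Y)); congr (\det _).
rewrite /char_poly_mx map_block_mx /= map_mx0 (scalar_mx_block k m).
by rewrite opp_block_mx add_block_mx !oppr0 !addr0 add0r.
Qed.

Lemma char_poly_scalar m (a : K) : char_poly (a%:M : 'M_m) = ('X - a%:P) ^+ m.
Proof. by rewrite /char_poly /char_poly_mx map_scalar_mx /= -raddfB det_scalar. Qed.

Lemma det_char_poly_factor n k (A : 'M[K]_n) (h : 'M_k) a : (k <= n)%N ->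
  char_poly A = char_poly h * ('X - a%:P) ^+ (n - k) -> \det A = \det h * a ^+ (n - k).
Proof.
have det_horner0 m (B : 'M[K]_m) : \det B = (-1) ^+ m * (char_poly B).[0].
  by rewrite horner_coef0 char_poly_det mulrA -expr2 sqrr_sign mul1r.
move=> kn cpA; rewrite det_horner0 (det_horner0 _ h) cpA hornerM horner_exp hornerXsubC.
rewrite sub0r [(- a) ^+ _]exprNn -{1}(subnKC kn) exprD -!mulrA; congr (_ * _).
by rewrite mulrCA signrMK.
Qed.

Lemma invariant_submx n k (V : 'M[K]_(k, n)) (A : 'M_n) a :
  (A - a%:M <= V)%MS -> (V *m A <= V)%MS.
Proof.
move=> AV; have -> : V *m A = V *m (A - a%:M) + a *: V.
  by rewrite mulmxBr mul_mx_scalar subrK.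
by rewrite addmx_sub ?scalemx_sub // (submx_trans (submxMl _ _) AV).
Qed.

Lemma mxrank_restrict_le n k (V : 'M[K]_(k, n)) (A : 'M_n) (h : 'M_k) c :
  row_free V -> V *m A = h *m V -> (\rank (h - c%:M)%R <= \rank (A - c%:M)%R)%N.
Proof.
move=> Vfree VA; rewrite -(mxrankMfree _ Vfree) mulmxBl -VA mul_scalar_mx.
by rewrite -mul_mx_scalar -mulmxBr mxrankM_maxr.
Qed.

Section Restriction.
Variables (n k : nat) (V : 'M[K]_(k, n)) (A : 'M[K]_n) (h : 'M[K]_k) (a : K).
Hypotheses (Vfree : row_free V) (AV : (A - a%:M <= V)%MS) (VA : V *m A = h *m V).

(* In a basis extending [V], [A] is block lower triangular with diagonal [h, a]. *)
Lemma char_poly_restrict : char_poly A = char_poly h * ('X - a%:P) ^+ (n - k).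
Proof.
pose W := row_base (V^C)%MS.
have rW : \rank V^C = (n - k)%N by rewrite mxrank_compl (eqP Vfree).
have e : (k + \rank V^C = n)%N by rewrite rW subnKC // -(eqP Vfree) rank_leq_col.
pose Y := W *m (A - a%:M) *m pinvmx V.
have WA : W *m (A - a%:M) = Y *m V.
  by rewrite mulmxKpV // (submx_trans (submxMl _ _) AV).
rewrite -rW -(char_poly_scalar _ a) -(char_poly_lblock h Y).
apply: (@char_poly_similar _ _ (col_mx V W)) => //.
  rewrite -sub1mx -addsmxE (adds_eqmx (eqmx_refl V) (eq_row_base _)).
  by rewrite sub1mx addsmx_compl_full.
rewrite mul_col_mx mul_block_col mul0mx addr0 VA mul_scalar_mx -WA.
by rewrite mulmxBr mul_mx_scalar subrK.
Qed.

Lemma det_restrict : \det A = \det h * a ^+ (n - k).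
Proof.
by rewrite (det_char_poly_factor _ char_poly_restrict) // -(eqP Vfree) rank_leq_col.
Qed.

(* [kermx (A - c)] lies in [V], and [h - c] is [A - c] seen on [V]. *)
Lemma mxrank_restrict c : c != a ->
  (\rank (h - c%:M)%R + n = \rank (A - c%:M)%R + k)%N.
Proof.
move=> ca; have KV : (kermx (A - c%:M) <= V)%MS.
  exact: submx_trans (kermx_sub_scalar_sub _ ca) AV.
have := mxrank_mul_ker V (A - c%:M); rewrite (capmx_idPr KV) mxrank_ker (eqP Vfree).
rewrite mulmxBr VA mul_mx_scalar -mul_scalar_mx -mulmxBl mxrankMfree //.
set rh := \rank (h - _)%R; have := rank_leq_col (A - c%:M); lia.
Qed.

End Restriction.

Lemma char_poly_size_le1 r (M : 'M[K]_r) : (r <= 1)%N ->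
  exists d, char_poly M = ('X - d%:P) ^+ r.
Proof.
case: r M => [|[|//]] M _; first by exists 0; rewrite /char_poly det_mx00 expr0.
by exists (M 0 0); rewrite /char_poly det_mx11 expr1 !mxE mulr1n.
Qed.

Lemma char_poly_rank1 k (h : 'M[K]_k) c : (0 < k)%N -> (\rank (h - c%:M)%R <= 1)%N ->
  exists d, char_poly h = ('X - c%:P) ^+ k.-1 * ('X - d%:P)
         /\ \det h = c ^+ k.-1 * d.
Proof.
move=> k0 r1; set V := row_base (h - c%:M).
suff [e cph] : exists e, char_poly h = ('X - c%:P) ^+ k.-1 * ('X - e%:P).
  exists e; split => //; rewrite (det_char_poly_factor (h := e%:M : 'M_1) (a := c)) //.
    by rewrite det_scalar1 subn1 mulrC.
  by rewrite char_poly_scalar expr1 subn1 mulrC.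
have hV : (h - c%:M <= V)%MS by rewrite eq_row_base.
have := char_poly_restrict (row_base_free _) hV (esym (mulmxKpV (invariant_submx hV))).
have [d ->] := char_poly_size_le1 (V *m h *m pinvmx V) r1.
case: (\rank (h - c%:M)%R) r1 => [|[|//]] _ ->.
  by exists c; rewrite expr0 mul1r subn0 -{1}(prednK k0) exprSr.
by exists d; rewrite expr1 subn1 mulrC.
Qed.

Lemma pseudorefl_sub_scalar_unit n (y : 'M[K]_n) c mu : c != 0 -> c != 1 -> mu != 1 ->
  (\rank (y - 1%:M)%R <= 1)%N -> \det y = c * mu -> y - c%:M \in unitmx.
Proof.
case: n y => [|n] y c0 c1 mu1 r1 dety; first by rewrite unitmxE det_mx00 unitr1.
have [d [cpy dety']] := char_poly_rank1 (ltn0Sn n) r1.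
apply/negPn/negP => ycu.
have : eigenvalue y c by rewrite /eigenvalue /eigenspace kermx_eq0 row_free_unit.
rewrite eigenvalue_root_char /root cpy hornerM horner_exp !hornerXsubC mulf_eq0.
rewrite expf_eq0 !subr_eq0 (negPf c1) andbF /= => /eqP cd.
move: dety; rewrite dety' expr1n mul1r -cd -{1}[c]mulr1 => /(mulfI c0)/esym/eqP.
by rewrite (negPf mu1).
Qed.
End InvariantSubspaces.

Lemma gprodE (K : fieldType) (m : nat) (g : 'I_m.+1 -> 'M[K]_m) (S : {set 'I_m.+1}) :
  gprod g S = \big[mulmx/1%:M]_(i in S) g i.
Proof. by rewrite /gprod -[RHS]big_filter [index_enum _]unlock. Qed.

Lemma gprod_enum_val (K : fieldType) (m : nat) (g : 'I_m.+1 -> 'M[K]_m)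
    (S : {set 'I_m.+1}) :
  gprod g S = \big[mulmx/1%:M]_(j < #|S|) g (enum_val j).
Proof.
rewrite /gprod (big_nth ord0) -cardE big_mkord; apply: eq_bigr => j _.
by rewrite (enum_val_nth ord0).
Qed.

Section JordanPochhammerSubproducts.
Variables (K : fieldType) (n : nat) (lam : 'I_n.+2 -> K) (g : 'I_n.+1 -> 'M[K]_n).
Hypotheses (lamP : JP_params lam) (gJP : JP_tuple lam g).
Variable S : {set 'I_n.+1}.
Hypotheses (S0 : S != set0) (Sn : (#|S| <= n)%N).

Local Notation l0 := (lam ord0).
Local Notation gS := (gprod g S).
Local Notation s := #|S|.

Let l0_neq0 : l0 != 0. Proof. by case: (lamP.1 ord0). Qed.

Lemma JP_unit j : g j \in unitmx.
Proof. by case: gJP. Qed.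

Lemma JP_pseudorefl j : pseudorefl l0 (g j).
Proof.
case: gJP => _ g1 detg _; have [l01 [_ lj1]] := (lamP.1 ord0, lamP.1 (lift ord0 j)).
by rewrite /pseudorefl g1 (pseudorefl_sub_scalar_unit l0_neq0 l01.2 lj1).
Qed.

Lemma size_enum_set : size (enum S) = s.
Proof. by rewrite -cardE. Qed.

Lemma gprod_unit : gS \in unitmx.
Proof. exact: big_mulmx_unit JP_unit. Qed.

Lemma gprod_mul_complement : exists cs : seq 'M_n,
  [/\ size cs = (n.+1 - s)%N, all (pseudorefl l0) cs
    & gS *m \big[mulmx/1%:M]_(y <- cs) y = l0%:M].
Proof.
have [cs [size_cs Pcs gE]] := big_mulmx_filter_conj (index_enum 'I_n.+1) (mem S)
  (@pseudorefl_conj K n l0) JP_unit JP_pseudorefl.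
exists cs; split => //.
  rewrite size_cs -sum1_count sum1_card; apply: (@addnI s).
  by rewrite subnKC ?(leqW Sn) // cardC card_ord.
by rewrite gprodE -gE; case: gJP.
Qed.

Lemma rank_gprod_sub1 : \rank (gS - 1%:M)%R = s.
Proof.
apply/eqP; rewrite eqn_leq; apply/andP; split.
  rewrite -size_enum_set; apply: mxrank_big_mulmx_sub1 => i _.
  by case/andP: (JP_pseudorefl i).
have [cs [size_cs Pcs gC]] := gprod_mul_complement.
have -> : gS - 1%:M = - l0^-1 *: (gS *m (\big[mulmx/1%:M]_(y <- cs) y - l0%:M)).
  rewrite mulmxBr gC mul_mx_scalar scalerBr scalerA scale_scalar_mx mulNr mulVf //.
  by rewrite scaleN1r opprK addrC raddfN.
rewrite mxrank_scale_nz ?oppr_eq0 ?invr_eq0 // (eqmxMfull _ _) ?row_full_unit ?gprod_unit //.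
have cs0 : cs != [::] by rewrite -size_eq0 size_cs subn_eq0 -ltnNge ltnS.
have := mxrank_big_mulmx_sub_scalar_ge (F := fun y => y) cs0 (allP Pcs).
rewrite size_cs; move: (\rank _) => r; lia.
Qed.

Lemma rank_gprod_sub_l0 : \rank (gS - l0%:M)%R = (n.+1 - s)%N.
Proof.
apply/eqP; rewrite eqn_leq; apply/andP; split.
  have [cs [size_cs Pcs gC]] := gprod_mul_complement.
  have -> : gS - l0%:M = - (gS *m (\big[mulmx/1%:M]_(y <- cs) y - 1%:M)).
    by rewrite mulmxBr gC mulmx1 opprB.
  rewrite mxrank_opp (eqmxMfull _ _) ?row_full_unit ?gprod_unit // -size_cs.
  by apply: mxrank_big_mulmx_sub1 => y /(allP Pcs)/andP[].
have S0' : enum S != [::] by rewrite -size_eq0 size_enum_set -lt0n card_gt0.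
have := mxrank_big_mulmx_sub_scalar_ge S0' (fun i _ => JP_pseudorefl i).
rewrite size_enum_set -/(gprod g S); move: (\rank _) => r; lia.
Qed.

Lemma det_gprod : \det gS = l0 ^+ s * lamS lam S.
Proof.
case: gJP => _ _ detg _.
rewrite gprodE (big_morph _ (@det_mulmx _ _) (det1 _ _)).
by under eq_bigr do rewrite detg; rewrite big_split prodr_const.
Qed.

(* [im (gS - 1)] has dimension [s] and lies in the sum of the [s] lines
   [im (g_i - 1)], so the two coincide. *)
Lemma im_JP_sub_im_gprod i : i \in S -> ((g i - 1%:M)^T <= (gS - 1%:M)^T)%MS.
Proof.
set U := (\sum_(j <- enum S) (g j - 1%:M)^T)%MS => iS.
have gU : ((gS - 1%:M)^T <= U)%MS := big_mulmx_sub1_sub (enum S) g.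
have rU : (\rank U <= s)%N.
  apply: leq_trans (mxrank_sumsmx_le _ _) _; rewrite -[s]size_enum_set -sum1_size.
  by apply: leq_sum => j _; rewrite mxrank_tr; case/andP: (JP_pseudorefl j).
have UgS : (U <= (gS - 1%:M)^T)%MS.
  by rewrite -(mxrank_leqif_sup gU).2 eqn_leq mxrankS // mxrank_tr rank_gprod_sub1.
by apply: submx_trans UgS; rewrite /U big_enum; apply: (sumsmx_sup i).
Qed.

Lemma rank_tr_gprod_sub1 : \rank (gS - 1%:M)^T = s.
Proof. by rewrite mxrank_tr rank_gprod_sub1. Qed.

Definition im_basis : 'M[K]_(s, n) :=
  castmx (rank_tr_gprod_sub1, erefl n) (row_base (gS - 1%:M)^T).
Local Notation V := im_basis.

Lemma im_basis_free : row_free V.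
Proof. by rewrite row_free_castmx row_base_free. Qed.

Lemma eqmx_im_basis : (V :=: (gS - 1%:M)^T)%MS.
Proof. exact: eqmx_trans (eqmx_cast _ _) (eq_row_base _). Qed.

Lemma tr_JP_sub1_sub_basis i : i \in S -> ((g i)^T - 1%:M <= V)%MS.
Proof. by move=> iS; rewrite -tr_sub_scalar eqmx_im_basis im_JP_sub_im_gprod. Qed.

Lemma tr_gprod_sub1_sub_basis : (gS^T - 1%:M <= V)%MS.
Proof. by rewrite -tr_sub_scalar eqmx_im_basis. Qed.

(* the action of [g i] on [im (gS - 1)], in the basis [V^T] *)
Definition JP_restr i : 'M[K]_s := (V *m (g i)^T *m pinvmx V)^T.

Lemma JP_restrP i : i \in S -> V *m (g i)^T = (JP_restr i)^T *m V.
Proof. by move=> /tr_JP_sub1_sub_basis/invariant_submx/mulmxKpV; rewrite trmxK. Qed.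

Definition JP_restr_prod : 'M[K]_s := \big[mulmx/1%:M]_(j < s) JP_restr (enum_val j).
Local Notation hS := JP_restr_prod.

Lemma JP_restr_prodP : V *m gS^T = hS^T *m V.
Proof.
apply: trmx_inj; rewrite !trmx_mul !trmxK gprod_enum_val.
apply: big_mulmx_intertwine => j _; apply: trmx_inj.
by rewrite !trmx_mul trmxK; apply: JP_restrP; apply: enum_valP.
Qed.

Lemma det_JP_restr_prod : \det hS = l0 ^+ s * lamS lam S.
Proof.
rewrite -det_gprod -det_tr -(det_tr gS).
by rewrite (det_restrict im_basis_free tr_gprod_sub1_sub_basis JP_restr_prodP) expr1n mulr1.
Qed.

Lemma rank_JP_restr_prod_sub_l0 : (\rank (hS - l0%:M)%R <= 1)%N.
Proof.
have l01 : l0 != 1 by case: (lamP.1 ord0).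
have := mxrank_restrict im_basis_free tr_gprod_sub1_sub_basis JP_restr_prodP l01.
rewrite -!tr_sub_scalar !mxrank_tr rank_gprod_sub_l0 subnK; last exact: leqW.
by move: (\rank _) => r; lia.
Qed.

Let s_gt0 : (0 < s)%N. Proof. by rewrite card_gt0. Qed.

Lemma char_poly_JP_restr_prod :
  char_poly hS = ('X - l0%:P) ^+ (s - 1) * ('X - (l0 * lamS lam S)%:P).
Proof.
have [d [-> deth]] := char_poly_rank1 s_gt0 rank_JP_restr_prod_sub_l0.
suff -> : l0 * lamS lam S = d by rewrite subn1.
have l0s : l0 ^+ s = l0 ^+ s.-1 * l0 by rewrite -exprSr prednK.
by move: deth; rewrite det_JP_restr_prod l0s -mulrA => /(mulfI (expf_neq0 _ l0_neq0)).
Qed.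

Lemma char_poly_gprod : char_poly gS
  = ('X - 1) ^+ (n - s) * ('X - l0%:P) ^+ (s - 1) * ('X - (l0 * lamS lam S)%:P).
Proof.
rewrite -char_poly_tr.
rewrite (char_poly_restrict im_basis_free tr_gprod_sub1_sub_basis JP_restr_prodP).
by rewrite char_poly_tr char_poly_JP_restr_prod polyC1 mulrC mulrA.
Qed.

Lemma det_JP_restr i : i \in S -> \det (JP_restr i) = \det (g i).
Proof.
move=> iS; rewrite -det_tr -(det_tr (g i)).
by rewrite (det_restrict im_basis_free (tr_JP_sub1_sub_basis iS) (JP_restrP iS)) expr1n mulr1.
Qed.

Lemma rank_JP_restr_sub1 i : i \in S -> (\rank (JP_restr i - 1%:M)%R <= 1)%N.
Proof.
move=> iS; rewrite -mxrank_tr tr_sub_scalar.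
apply: leq_trans (mxrank_restrict_le _ im_basis_free (JP_restrP iS)) _.
by rewrite -tr_sub_scalar mxrank_tr; case/andP: (JP_pseudorefl i).
Qed.

Lemma lamS_neq0 : lamS lam S != 0.
Proof. by apply/prodf_neq0 => i _; case: (lamP.1 (lift ord0 i)). Qed.

Lemma JP_restr_prod_unit : hS \in unitmx.
Proof. by rewrite unitmxE unitfE det_JP_restr_prod mulf_neq0 ?expf_neq0 ?lamS_neq0. Qed.

Lemma invmx_gprod_restr : invmx gS *m V^T = V^T *m invmx hS.
Proof.
have gSV : gS *m V^T = V^T *m hS.
  by apply: trmx_inj; rewrite !trmx_mul !trmxK JP_restr_prodP.
apply: (can_inj (mulKmx gprod_unit)).
by rewrite mulKVmx ?gprod_unit // mulmxA gSV -mulmxA mulmxV ?JP_restr_prod_unit ?mulmx1.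
Qed.

Definition JP_restr_tuple (k : 'I_s.+1) : 'M[K]_s :=
  if insub (val k) : option 'I_s is Some j then JP_restr (enum_val j)
  else l0 *: invmx hS.

Lemma JP_restr_tuple_widen j : JP_restr_tuple (widen_ord (leqnSn s) j) = JP_restr (enum_val j).
Proof. by rewrite /JP_restr_tuple /= valK. Qed.

Lemma JP_restr_tuple_max : JP_restr_tuple ord_max = l0 *: invmx hS.
Proof. by rewrite /JP_restr_tuple /= insubN // ltnn. Qed.

Lemma det_JP_restr_tuple k :
  \det (JP_restr_tuple k) = restr_params lam S ord0 * restr_params lam S (lift ord0 k).
Proof.
case: gJP => _ _ detg _; rewrite /restr_params lift0 /= /JP_restr_tuple.
case: insubP => [j _ _ | _]; first by rewrite det_JP_restr ?enum_valP.
rewrite detZ det_inv det_JP_restr_prod !invfM mulrA mulfV ?expf_neq0 // mul1r.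
by rewrite mulrA mulfV // mul1r.
Qed.

Lemma rank_JP_restr_tuple_sub1 k : (\rank (JP_restr_tuple k - 1%:M)%R <= 1)%N.
Proof.
rewrite /JP_restr_tuple; case: insubP => [j _ _ | _].
  exact/rank_JP_restr_sub1/enum_valP.
have -> : l0 *: invmx hS - 1%:M = (l0%:M - hS) *m invmx hS.
  by rewrite mulmxBl mul_scalar_mx mulmxV ?JP_restr_prod_unit.
apply: leq_trans (mxrankM_maxl _ _) _.
by rewrite -mxrank_opp opprB rank_JP_restr_prod_sub_l0.
Qed.

Lemma JP_tuple_restr : JP_tuple (restr_params lam S) JP_restr_tuple.
Proof.
split; [|exact: rank_JP_restr_tuple_sub1|exact: det_JP_restr_tuple|].
  move=> k; rewrite unitmxE unitfE det_JP_restr_tuple /restr_params lift0 /=.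
  rewrite mulf_neq0 //; case: insubP => [j _ _ | _].
    by case: (lamP.1 (lift ord0 (enum_val j))).
  by rewrite invr_neq0 // mulf_neq0 ?lamS_neq0.
rewrite big_ord_recr /=; under eq_bigr do rewrite JP_restr_tuple_widen.
by rewrite JP_restr_tuple_max -scalemxAr mulmxV ?JP_restr_prod_unit // scalemx1.
Qed.

Lemma rank_kermx_gprod_sub1 : \rank (kermx (gS - 1%:M)^T) = (n - s)%N.
Proof. by rewrite mxrank_ker mxrank_tr rank_gprod_sub1. Qed.

Lemma rank_kermx_gprod_sub_l0 : \rank (kermx (gS - l0%:M)^T) = (s - 1)%N.
Proof. by rewrite mxrank_ker mxrank_tr rank_gprod_sub_l0; lia. Qed.

Lemma im_gprod_sub1_invariant i : i \in S ->
  ((g i *m (gS - 1%:M))^T <= (gS - 1%:M)^T)%MS.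
Proof.
move=> iS; rewrite trmx_mul -[(g i)^T](subrK 1%:M) -tr_sub_scalar mulmxDr mulmx1.
by rewrite addmx_sub // (submx_trans (submxMl _ _)) ?im_JP_sub_im_gprod.
Qed.

Lemma JP_restr_tupleP j :
  g (enum_val j) *m V^T = V^T *m JP_restr_tuple (widen_ord (leqnSn s) j).
Proof.
rewrite JP_restr_tuple_widen; apply: trmx_inj; rewrite !trmx_mul trmxK.
exact/JP_restrP/enum_valP.
Qed.

Lemma JP_restr_tuple_maxP : (l0 *: invmx gS) *m V^T = V^T *m JP_restr_tuple ord_max.
Proof. by rewrite JP_restr_tuple_max -scalemxAl -scalemxAr invmx_gprod_restr. Qed.

End JordanPochhammerSubproducts.

Theorem mainTheorem4 (K : fieldType) (n : nat) (lam : 'I_n.+2 -> K)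
    (g : 'I_n.+1 -> 'M[K]_n) (S : {set 'I_n.+1}) :
  JP_params lam -> JP_tuple lam g ->
  S != set0 -> (#|S| <= n)%N ->
  [/\ \rank (kermx (gprod g S - 1%:M)^T) = (n - #|S|)%N,
      \rank (kermx (gprod g S - (lam ord0)%:M)^T) = (#|S| - 1)%N,
      char_poly (gprod g S)
        = ('X - 1) ^+ (n - #|S|) * ('X - (lam ord0)%:P) ^+ (#|S| - 1)
          * ('X - (lam ord0 * lamS lam S)%:P)
    & lamS lam S != 1 ->
      (forall i, i \in S ->
         ((g i *m (gprod g S - 1%:M))^T <= (gprod g S - 1%:M)^T)%MS)
      /\ exists (B : 'M[K]_(n, #|S|)) (h : 'I_(#|S|).+1 -> 'M[K]_(#|S|)),
           [/\ \rank B = #|S|,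
               (B^T == (gprod g S - 1%:M)^T)%MS,
               forall j : 'I_#|S|, g (enum_val j) *m B = B *m h (widen_ord (leqnSn _) j),
               (lam ord0 *: invmx (gprod g S)) *m B = B *m h ord_max
             & JP_tuple (restr_params lam S) h ] ].
Proof.
move=> lamP gJP S0 Sn; split.
- exact: (rank_kermx_gprod_sub1 lamP gJP S0 Sn).
- exact: (rank_kermx_gprod_sub_l0 lamP gJP S0 Sn).
- exact: (char_poly_gprod lamP gJP S0 Sn).
(* [lamS lam S != 1] only makes the last restricted parameter differ from 1;
   the restricted tuple exists regardless. *)
move=> _; split; first exact: (im_gprod_sub1_invariant lamP gJP S0 Sn).
exists (im_basis lamP gJP S0 Sn)^T, (JP_restr_tuple lamP gJP S0 Sn); split.
- by rewrite mxrank_tr (eqP (im_basis_free _ _ _ _)).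
- by rewrite trmxK; apply/eqmxP; exact: eqmx_im_basis.
- exact: (JP_restr_tupleP lamP gJP S0 Sn).
- exact: (JP_restr_tuple_maxP lamP gJP S0 Sn).
- exact: (JP_tuple_restr lamP gJP S0 Sn).
Qed.
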